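(* Let $f:\mathbb{R}^m\times\mathbb{R}^n\to\mathbb{R}$ satisfy the standing assumption described in the context, and let $\kappa=L_1/\mu$. Define $G(x,y)=\big[\nabla_{11} f - \nabla_{12} f (\nabla_{22} f)^{-1} \nabla_{21} f\big](x,y)$. Then: (1) $G$ is Lipschitz continuous on $\mathbb{R}^{m+n}$ (with respect to the Euclidean norm on $(x,y)$ and the spectral norm on matrices) with constant $L_G=L_2(1+\kappa)^2$; (2) the envelope function $\Phi(x)=\max_{y\in\mathbb{R}^n} f(x,y)$ is twice differentiable with $\nabla^2\Phi(x)=G(x,y^*(x))$ for all $x\in\mathbb{R}^m$, where $y^*(x)=\arg\max_{y} f(x,y)$, and $\nabla^2\Phi$ is Lipschitz continuous with constant $L_\Phi=L_G(1+\kappa)=L_2(1+\kappa)^3$.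
   Context: Standing assumption: $f:\mathbb{R}^m\times\mathbb{R}^n\to\mathbb{R}$ is twice continuously differentiable and (i) $\nabla f$ is $L_1$-Lipschitz on $\mathbb{R}^{m+n}$, and for every fixed $x$ the map $y\mapsto f(x,y)$ is $\mu$-strongly concave ($\mu>0$); (ii) the Jacobian blocks $\nabla_{11} f,\nabla_{12} f,\nabla_{21} f,\nabla_{22} f$, viewed as functions of $(x,y)$, are $L_2$-Lipschitz (Euclidean norm on $(x,y)$, spectral norm on matrices); (iii) $\Phi(x):=\max_{y\in\mathbb{R}^n}f(x,y)$ is bounded below and has compact sub-level sets. Notation: $\nabla_1 f,\nabla_2 f$ are the partial gradients in $x$ and $y$; $\nabla_{11}f$, $\nabla_{22}f$ are the partial Hessians in $x$ and $y$; $\nabla_{12}f\in\mathbb{R}^{m\times n}$ is the Jacobian of $\nabla_1 f$ with respect to $y$ and $\nabla_{21}f\in\mathbb{R}^{n\times m}$ is the Jacobian of $\nabla_2 f$ with respect to $x$. By strong concavity, $y^*(x)=\arg\max_y f(x,y)$ is unique, and $\nabla_{22}f$ is invertible. *)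

From HB Require Import structures.
From mathcomp Require Import all_boot all_order all_algebra.
From mathcomp Require Import all_classical all_reals all_analysis.
Set Implicit Arguments. Unset Strict Implicit. Unset Printing Implicit Defensive.
Import Order.TTheory GRing.Theory Num.Theory.
Import numFieldNormedType.Exports.
Local Open Scope classical_set_scope.
Local Open Scope ring_scope.

Section Defs.
Variable R : realType.

Definition enorm k (v : 'cV[R]_k) : R := Num.sqrt (\sum_i (v i 0) ^+ 2).

(* Euclidean norm of the pair (x,y), i.e. of the concatenated vector in R^(m+n) *)
Definition pnorm m n (x : 'cV[R]_m) (y : 'cV[R]_n) : R :=
  Num.sqrt (enorm x ^+ 2 + enorm y ^+ 2).

Definition opnorm p q (A : 'M[R]_(p, q)) : R :=
  sup [set enorm (A *m v) | v in [set v : 'cV[R]_q | enorm v <= 1]].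

Definition ebasis k (i : 'I_k) : 'cV[R]_k := delta_mx i 0.

Variables (m n : nat).
Implicit Type f : 'cV[R]_m -> 'cV[R]_n -> R.

Definition grad1 f x y : 'cV[R]_m :=
  \col_i derive (fun x' => f x' y) x (ebasis i).
Definition grad2 f x y : 'cV[R]_n :=
  \col_j derive (fun y' => f x y') y (ebasis j).

Definition hess11 f x y : 'M[R]_(m, m) :=
  \matrix_(i, k) derive (fun x' => grad1 f x' y i 0) x (ebasis k).
Definition hess12 f x y : 'M[R]_(m, n) :=
  \matrix_(i, j) derive (fun y' => grad1 f x y' i 0) y (ebasis j).
Definition hess21 f x y : 'M[R]_(n, m) :=
  \matrix_(j, i) derive (fun x' => grad2 f x' y j 0) x (ebasis i).
Definition hess22 f x y : 'M[R]_(n, n) :=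
  \matrix_(j, l) derive (fun y' => grad2 f x y' j 0) y (ebasis l).

Definition fjoint f (p : 'cV[R]_m * 'cV[R]_n) : R := f p.1 p.2.
Definition gradjoint f (p : 'cV[R]_m * 'cV[R]_n) : 'cV[R]_m * 'cV[R]_n :=
  (grad1 f p.1 p.2, grad2 f p.1 p.2).

Definition C2 f : Prop :=
  (forall p, differentiable (fjoint f) p) /\
  (forall p, differentiable (gradjoint f) p) /\
  continuous (fun p : 'cV[R]_m * 'cV[R]_n => hess11 f p.1 p.2) /\
  continuous (fun p : 'cV[R]_m * 'cV[R]_n => hess12 f p.1 p.2) /\
  continuous (fun p : 'cV[R]_m * 'cV[R]_n => hess21 f p.1 p.2) /\
  continuous (fun p : 'cV[R]_m * 'cV[R]_n => hess22 f p.1 p.2).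

Definition strongly_concave (mu : R) (g : 'cV[R]_n -> R) : Prop :=
  forall y y' (t : R), 0 <= t <= 1 ->
    t * g y + (1 - t) * g y' + mu / 2 * t * (1 - t) * enorm (y - y') ^+ 2
      <= g (t *: y + (1 - t) *: y').

Definition Phi f (x : 'cV[R]_m) : R := sup (range (f x)).

Definition Gmat f x y : 'M[R]_(m, m) :=
  hess11 f x y - hess12 f x y *m invmx (hess22 f x y) *m hess21 f x y.

Definition standing_assumption f (L1 L2 mu : R) : Prop :=
  C2 f /\
  (forall x y x' y',
     pnorm (grad1 f x y - grad1 f x' y') (grad2 f x y - grad2 f x' y')
       <= L1 * pnorm (x - x') (y - y')) /\
  0 < mu /\ (forall x, strongly_concave mu (f x)) /\
  (forall x y x' y',
     opnorm (hess11 f x y - hess11 f x' y') <= L2 * pnorm (x - x') (y - y') /\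
     opnorm (hess12 f x y - hess12 f x' y') <= L2 * pnorm (x - x') (y - y') /\
     opnorm (hess21 f x y - hess21 f x' y') <= L2 * pnorm (x - x') (y - y') /\
     opnorm (hess22 f x y - hess22 f x' y') <= L2 * pnorm (x - x') (y - y')) /\
  (exists b, forall x, b <= Phi f x) /\
  (forall c, compact [set x | Phi f x <= c]).

Definition gradx (g : 'cV[R]_m -> R) x : 'cV[R]_m := \col_i derive g x (ebasis i).
Definition hessx (g : 'cV[R]_m -> R) x : 'M[R]_(m, m) :=
  \matrix_(i, k) derive (fun x' => gradx g x' i 0) x (ebasis k).

End Defs.

(* Strong concavity makes the block H22 of the Hessian of f negative definite,
   with ||H22^-1|| <= 1/mu, and the L1-Lipschitz gradient bounds H12 and H21 by
   L1.  Expanding G(z) - G(z') for the Schur complement G = H11 - H12 H22^-1 H21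
   blockwise, with H22^-1 - H22'^-1 = H22^-1 (H22' - H22) H22'^-1, gives (1).
   For (2), strong monotonicity of grad_y f and the first-order condition
   grad_y f(x, y*(x)) = 0 make y* (L1/mu)-Lipschitz.  Hence Phi(x + h) - Phi(x)
   and f(x + h, y*(x)) - f(x, y*(x)) differ by O(|h|^2), so grad Phi(x) =
   grad_x f(x, y*(x)) (Danskin).  Differentiating grad_y f(x, y*(x)) = 0 gives
   Dy* = -H22^-1 H21, and the chain rule gives Hess Phi(x) = G(x, y*(x)), whose
   Lipschitz constant picks up the factor 1 + kappa from
   |(x - x', y*(x) - y*(x'))| <= (1 + kappa) |x - x'|. *)

From HB Require Import structures.
From mathcomp Require Import all_boot all_order all_algebra.
From mathcomp Require Import all_classical all_reals all_analysis.
From mathcomp Require Import ring lra.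
Set Implicit Arguments. Unset Strict Implicit. Unset Printing Implicit Defensive.
Import Order.TTheory GRing.Theory Num.Theory.
Import numFieldNormedType.Exports.
Local Open Scope classical_set_scope.
Local Open Scope ring_scope.

Section EuclideanNorm.
Variable R : realType.

Lemma le_of_sqr_le (x y : R) : 0 <= y -> x ^+ 2 <= y ^+ 2 -> x <= y.
Proof.
move=> y0 h; apply: (le_trans (ler_norm x)).
by rewrite -sqrtr_sqr -(ger0_norm y0) -sqrtr_sqr ler_wsqrtr.
Qed.

Lemma cauchy_schwarz_sum k (a b : 'I_k -> R) :
  (\sum_i a i * b i) ^+ 2 <= (\sum_i a i ^+ 2) * (\sum_i b i ^+ 2).
Proof.
set A := \sum_i a i ^+ 2; set B := \sum_i b i ^+ 2; set C := \sum_i a i * b i.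
have B0 : 0 <= B by apply: sumr_ge0 => i _; exact: sqr_ge0.
have [Bz|Bnz] := eqVneq B 0.
  have bz := psumr_eq0P (fun i _ => sqr_ge0 (b i)) Bz.
  have -> : C = 0.
    by rewrite [C]big1 // => i _; rewrite (eqP (_ : b i == 0)) ?mulr0 // -sqrf_eq0 bz.
  by rewrite expr0n mulr_ge0 // sumr_ge0 // => i _; exact: sqr_ge0.
(* minimise the quadratic [t |-> sum (a i - t b i)^2] at [t = C / B] *)
set t := C / B.
have : 0 <= A - (t *+ 2) * C + t ^+ 2 * B.
  have -> : A - (t *+ 2) * C + t ^+ 2 * B = \sum_i (a i - t * b i) ^+ 2.
    rewrite /A /B /C !mulr_sumr -sumrB -big_split /=.
    by apply: eq_bigr => i _; ring.
  by apply: sumr_ge0 => i _; exact: sqr_ge0.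
have -> : C = t * B by rewrite /t divfK.
have Bp : 0 < B by rewrite lt_def Bnz B0.
nra.
Qed.

Definition dot k (u v : 'cV[R]_k) : R := \sum_i u i 0 * v i 0.

Lemma dotC k (u v : 'cV[R]_k) : dot u v = dot v u.
Proof. by apply: eq_bigr => i _; rewrite mulrC. Qed.

Lemma dotDl k (u v w : 'cV[R]_k) : dot (u + v) w = dot u w + dot v w.
Proof. by rewrite /dot -big_split; apply: eq_bigr => i _; rewrite mxE mulrDl. Qed.

Lemma dotZl k a (u w : 'cV[R]_k) : dot (a *: u) w = a * dot u w.
Proof. by rewrite /dot mulr_sumr; apply: eq_bigr => i _; rewrite mxE mulrA. Qed.

Lemma dotNl k (u w : 'cV[R]_k) : dot (- u) w = - dot u w.
Proof. by rewrite -scaleN1r dotZl mulN1r. Qed.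

Lemma dotBl k (u v w : 'cV[R]_k) : dot (u - v) w = dot u w - dot v w.
Proof. by rewrite dotDl dotNl. Qed.

Lemma dotDr k (u v w : 'cV[R]_k) : dot w (u + v) = dot w u + dot w v.
Proof. by rewrite dotC dotDl !(dotC w). Qed.

Lemma dotZr k a (u w : 'cV[R]_k) : dot w (a *: u) = a * dot w u.
Proof. by rewrite dotC dotZl dotC. Qed.

Lemma dotNr k (u w : 'cV[R]_k) : dot w (- u) = - dot w u.
Proof. by rewrite dotC dotNl dotC. Qed.

Lemma dot0l k (w : 'cV[R]_k) : dot 0 w = 0.
Proof. by rewrite /dot big1 // => i _; rewrite mxE mul0r. Qed.

Lemma dot0r k (w : 'cV[R]_k) : dot w 0 = 0.
Proof. by rewrite dotC dot0l. Qed.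

Lemma enorm_ge0 k (v : 'cV[R]_k) : 0 <= enorm v.
Proof. exact: sqrtr_ge0. Qed.

Lemma enorm_sqr k (v : 'cV[R]_k) : enorm v ^+ 2 = dot v v.
Proof.
rewrite sqr_sqrtr; last by apply: sumr_ge0 => i _; exact: sqr_ge0.
by apply: eq_bigr => i _; rewrite expr2.
Qed.

Lemma dot_cauchy_schwarz k (u v : 'cV[R]_k) : `|dot u v| <= enorm u * enorm v.
Proof.
rewrite -sqrtr_sqr /enorm -sqrtrM; last by apply: sumr_ge0 => i _; exact: sqr_ge0.
exact/ler_wsqrtr/cauchy_schwarz_sum.
Qed.

Lemma dot_le_enorm k (u v : 'cV[R]_k) : dot u v <= enorm u * enorm v.
Proof. exact: le_trans (ler_norm _) (dot_cauchy_schwarz _ _). Qed.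

Lemma enormD k (u v : 'cV[R]_k) : enorm (u + v) <= enorm u + enorm v.
Proof.
apply: le_of_sqr_le; first by rewrite addr_ge0 ?enorm_ge0.
rewrite enorm_sqr dotDl !dotDr (dotC v u) sqrrD !enorm_sqr.
have := dot_le_enorm u v; nra.
Qed.

Lemma enormZ k a (v : 'cV[R]_k) : enorm (a *: v) = `|a| * enorm v.
Proof.
apply/eqP; rewrite -(@eqrXn2 _ 2) ?mulr_ge0 ?enorm_ge0 //.
by rewrite exprMn real_normK ?num_real // !enorm_sqr dotZl dotZr mulrA.
Qed.

Lemma enormN k (v : 'cV[R]_k) : enorm (- v) = enorm v.
Proof. by rewrite -scaleN1r enormZ normrN normr1 mul1r. Qed.

Lemma enorm_distC k (u v : 'cV[R]_k) : enorm (u - v) = enorm (v - u).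
Proof. by rewrite -enormN opprB. Qed.

Lemma enorm0 k : enorm (0 : 'cV[R]_k) = 0.
Proof. by rewrite -(scale0r 0) enormZ normr0 mul0r. Qed.

Lemma enorm_eq0 k (v : 'cV[R]_k) : enorm v = 0 -> v = 0.
Proof.
move=> /eqP; rewrite sqrtr_eq0 => h.
have h0 : \sum_i v i 0 ^+ 2 = 0.
  by apply/eqP; rewrite eq_le h sumr_ge0 // => i _; exact: sqr_ge0.
apply/matrixP => i j; rewrite (ord1 j) mxE; apply/eqP; rewrite -sqrf_eq0.
by rewrite (psumr_eq0P (fun i _ => sqr_ge0 (v i 0)) h0).
Qed.

Lemma enorm_gt0 k (v : 'cV[R]_k) : v != 0 -> 0 < enorm v.
Proof. by move=> v0; rewrite lt_def enorm_ge0 andbT; apply: contra_neqN v0 => /eqP/enorm_eq0 ->. Qed.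

Lemma enorm_dist_dist k (a b : 'cV[R]_k) : `|enorm a - enorm b| <= enorm (a - b).
Proof.
have := enormD (a - b) b; have := enormD (b - a) a.
rewrite !subrK enorm_distC ler_norml => h1 h2.
by apply/andP; split; lra.
Qed.

(* On matrices [`|_|] is the max norm, in which differentials are estimated. *)
Lemma entry_le_norm p q (M : 'M[R]_(p, q)) i j : `|M i j| <= `|M|.
Proof.
have -> : `|M| = mx_norm M by [].
by rewrite mx_normrE; apply/bigmax_geP; right; exists (i, j).
Qed.

Lemma norm_le_enorm k (v : 'cV[R]_k) : `|v| <= enorm v.
Proof.
have -> : `|v| = mx_norm v by [].
rewrite mx_normrE; apply/bigmax_leP; split => [|[i j] _ /=]; first exact: enorm_ge0.
rewrite (ord1 j) -sqrtr_sqr; apply: ler_wsqrtr.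
by rewrite (bigD1 i) //= lerDl; apply: sumr_ge0 => l _; exact: sqr_ge0.
Qed.

Lemma enorm_le_norm k (v : 'cV[R]_k) : enorm v <= k%:R * `|v|.
Proof.
apply: le_of_sqr_le; first by rewrite mulr_ge0.
rewrite enorm_sqr.
have h1 : dot v v <= \sum_(i < k) `|v| ^+ 2.
  apply: ler_sum => i _; rewrite -expr2 -real_normK ?num_real //.
  by rewrite lerXn2r ?nnegrE ?normr_ge0 // entry_le_norm.
apply: (le_trans h1); rewrite sumr_const card_ord -mulr_natl.
have hk : (k%:R : R) = 0 \/ 1 <= (k%:R : R).
  by case: k {v h1} => [|k]; [left | right; rewrite ler1n].
have := sqr_ge0 `|v|; nra.
Qed.

Lemma pnorm_ge0 p q (a : 'cV[R]_p) (b : 'cV[R]_q) : 0 <= pnorm a b.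
Proof. exact: sqrtr_ge0. Qed.

Lemma pnorm_sqr p q (a : 'cV[R]_p) (b : 'cV[R]_q) :
  pnorm a b ^+ 2 = enorm a ^+ 2 + enorm b ^+ 2.
Proof. by rewrite sqr_sqrtr // addr_ge0 ?sqr_ge0. Qed.

Lemma enorm_le_pnorml p q (a : 'cV[R]_p) (b : 'cV[R]_q) : enorm a <= pnorm a b.
Proof. by apply: le_of_sqr_le; rewrite ?pnorm_ge0 // pnorm_sqr lerDl sqr_ge0. Qed.

Lemma enorm_le_pnormr p q (a : 'cV[R]_p) (b : 'cV[R]_q) : enorm b <= pnorm a b.
Proof. by apply: le_of_sqr_le; rewrite ?pnorm_ge0 // pnorm_sqr lerDr sqr_ge0. Qed.

Lemma pnorm_le_add p q (a : 'cV[R]_p) (b : 'cV[R]_q) :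
  pnorm a b <= enorm a + enorm b.
Proof.
apply: le_of_sqr_le; first by rewrite addr_ge0 ?enorm_ge0.
rewrite pnorm_sqr; have := enorm_ge0 a; have := enorm_ge0 b; nra.
Qed.

Lemma pnorm0l p q (b : 'cV[R]_q) : pnorm (0 : 'cV[R]_p) b = enorm b.
Proof. by rewrite /pnorm enorm0 expr0n add0r sqrtr_sqr ger0_norm ?enorm_ge0. Qed.

Lemma pnorm0r p q (a : 'cV[R]_p) : pnorm a (0 : 'cV[R]_q) = enorm a.
Proof. by rewrite /pnorm enorm0 expr0n addr0 sqrtr_sqr ger0_norm ?enorm_ge0. Qed.

End EuclideanNorm.

Section OperatorNorm.
Variable R : realType.

Lemma enorm_mulmx_frobenius p q (A : 'M[R]_(p, q)) v :
  enorm (A *m v) <= Num.sqrt (\sum_i \sum_j A i j ^+ 2) * enorm v.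
Proof.
rewrite /enorm -sqrtrM; last by do 2 (apply: sumr_ge0 => ? _); exact: sqr_ge0.
apply: ler_wsqrtr; rewrite mulr_suml; apply: ler_sum => i _.
rewrite mxE; exact: cauchy_schwarz_sum.
Qed.

Lemma opnorm_has_sup p q (A : 'M[R]_(p, q)) :
  has_sup [set enorm (A *m v) | v in [set v : 'cV[R]_q | enorm v <= 1]].
Proof.
split; first by exists 0, 0; rewrite /= ?mulmx0 enorm0.
exists (Num.sqrt (\sum_i \sum_j A i j ^+ 2)) => _ [v /= v1 <-].
apply: (le_trans (enorm_mulmx_frobenius A v)).
by rewrite ler_piMr ?sqrtr_ge0.
Qed.

Lemma opnorm_ge0 p q (A : 'M[R]_(p, q)) : 0 <= opnorm A.
Proof.
apply: sup_upper_bound; first exact: opnorm_has_sup.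
by exists 0; rewrite /= ?mulmx0 enorm0.
Qed.

Lemma enorm_mulmx_le p q (A : 'M[R]_(p, q)) v : enorm (A *m v) <= opnorm A * enorm v.
Proof.
have [->|v0] := eqVneq v 0; first by rewrite mulmx0 !enorm0 mulr0.
have ev := enorm_gt0 v0.
have : enorm (A *m ((enorm v)^-1 *: v)) <= opnorm A.
  apply: sup_upper_bound; first exact: opnorm_has_sup.
  exists ((enorm v)^-1 *: v) => //=.
  by rewrite enormZ ger0_norm ?invr_ge0 ?enorm_ge0 // mulVf // gt_eqF.
rewrite -scalemxAr enormZ ger0_norm ?invr_ge0 ?enorm_ge0 //.
by rewrite mulrC ler_pdivrMr.
Qed.

Lemma opnorm_le p q (A : 'M[R]_(p, q)) c :
  0 <= c -> (forall v, enorm (A *m v) <= c * enorm v) -> opnorm A <= c.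
Proof.
move=> c0 h; apply: ge_sup; first by exists 0, 0; rewrite /= ?mulmx0 enorm0.
move=> _ [v /= v1 <-]; apply: (le_trans (h v)).
by rewrite ler_piMr.
Qed.

Lemma opnormD p q (A B : 'M[R]_(p, q)) : opnorm (A + B) <= opnorm A + opnorm B.
Proof.
apply: opnorm_le; first by rewrite addr_ge0 ?opnorm_ge0.
move=> v; rewrite mulmxDl mulrDl; apply: (le_trans (enormD _ _)).
by rewrite lerD ?enorm_mulmx_le.
Qed.

Lemma opnormN p q (A : 'M[R]_(p, q)) : opnorm (- A) = opnorm A.
Proof.
have h (B : 'M[R]_(p, q)) : opnorm (- B) <= opnorm B.
  apply: opnorm_le; first exact: opnorm_ge0.
  by move=> v; rewrite mulNmx enormN enorm_mulmx_le.
by apply/eqP; rewrite eq_le h /= -{1}(opprK A) h.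
Qed.

Lemma opnormM p q r (A : 'M[R]_(p, q)) (B : 'M[R]_(q, r)) :
  opnorm (A *m B) <= opnorm A * opnorm B.
Proof.
apply: opnorm_le; first by rewrite mulr_ge0 ?opnorm_ge0.
move=> v; rewrite -mulmxA; apply: (le_trans (enorm_mulmx_le _ _)).
by rewrite -mulrA ler_wpM2l ?opnorm_ge0 ?enorm_mulmx_le.
Qed.

Lemma opnorm_mulmx3_le p q r s (A : 'M[R]_(p, q)) (B : 'M[R]_(q, r))
    (C : 'M[R]_(r, s)) a b c :
  opnorm A <= a -> opnorm B <= b -> opnorm C <= c ->
  opnorm (A *m B *m C) <= a * b * c.
Proof.
move=> ha hb hc; apply: (le_trans (opnormM _ _)).
rewrite ler_pM ?opnorm_ge0 //; apply: (le_trans (opnormM _ _)).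
by rewrite ler_pM ?opnorm_ge0.
Qed.

Lemma opnorm0 p q : opnorm (0 : 'M[R]_(p, q)) = 0.
Proof.
apply/eqP; rewrite eq_le opnorm_ge0 andbT; apply: opnorm_le => // v.
by rewrite mul0mx enorm0 mul0r.
Qed.

End OperatorNorm.

Section Calculus.
Variables (R : realType) (U V W : normedModType R).

Lemma fst_continuous : continuous (fst : U * V -> U).
Proof. by move=> [a b]; exact: cvg_fst. Qed.

Lemma snd_continuous : continuous (snd : U * V -> V).
Proof. by move=> [a b]; exact: cvg_snd. Qed.

Lemma lipschitz_continuous (N : V -> W) C :
  (forall a b, `|N a - N b| <= C * `|a - b|) -> continuous N.
Proof.
move=> NL x; apply/cvgrPdist_le => e e0.
have C1 : 0 < `|C| + 1 by rewrite ltr_pwDr.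
near=> y; apply: (le_trans (NL _ _)); apply: (le_trans (ler_norm _)).
rewrite normrM; apply: (@le_trans _ _ ((`|C| + 1) * `|x - y|)).
  by rewrite normr_id ler_wpM2r // lerDl.
rewrite -ler_pdivlMl //; near: y; apply: cvgr_dist_le => //.
by rewrite mulr_gt0 ?invr_gt0.
Unshelve. all: by end_near. Qed.

Lemma linear_continuous_of_bound (L : {linear V -> W}) C :
  (forall v, `|L v| <= C * `|v|) -> continuous L.
Proof.
move=> hC; apply: bounded_linear_continuous; apply/linear_boundedP.
near=> r => x; apply: (le_trans (hC x)); apply: ler_wpM2r; first exact: normr_ge0.
by near: r; apply: nbhs_pinfty_ge; exact: num_real.
Unshelve. all: by end_near. Qed.

Lemma differentiable_remainder (G : V -> W) p : differentiable G p ->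
  forall e, 0 < e -> exists2 d, 0 < d &
    forall h, `|h| < d -> `|G (p + h) - G p - 'd G p h| <= e * `|h|.
Proof.
move=> /diff_locally /eqaddoP dG e e0.
have /nbhs_norm0P [d d0 Hd] := dG e e0.
exists d => // h hd; have := Hd h hd.
suff -> : G (p + h) - G p - 'd G p h = (G \o shift p - (cst (G p) + 'd G p)) h by [].
by rewrite [p + h]addrC /= opprD addrA.
Qed.

Lemma differentiable_of_remainder (G : V -> W) p (L : {linear V -> W}) :
  continuous L ->
  (forall e, 0 < e -> exists2 d, 0 < d &
    forall h, `|h| < d -> `|G (p + h) - G p - L h| <= e * `|h|) ->
  differentiable G p /\ 'd G p = L :> (V -> W).
Proof.
move=> Lc H.
have E : G \o shift p = cst (G p) + L +o_ 0 id.
  apply/eqaddoP => e e0; have [d d0 Hd] := H e e0.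
  apply/nbhs_norm0P; exists d => // h /= hd.
  suff -> : (G \o shift p - (cst (G p) + L)) h = G (p + h) - G p - L h by exact: Hd.
  by rewrite [p + h]addrC /= opprD addrA.
have dE := diff_unique Lc E.
by split => //; apply/diff_locallyP; rewrite dE.
Qed.

Lemma differentiable_remainder_comp (G : V -> W) p (z : U -> V) C :
  differentiable G p -> (forall h, `|z h| <= C * `|h|) ->
  forall e, 0 < e -> exists2 d, 0 < d & forall h, `|h| < d ->
    `|G (p + z h) - G p - 'd G p (z h)| <= e * `|h|.
Proof.
move=> dG zC e e0.
have C1 : 0 < `|C| + 1 by rewrite ltr_pwDr.
have zC1 h : `|z h| <= (`|C| + 1) * `|h|.
  apply: (le_trans (zC h)); apply: ler_wpM2r => //.
  by rewrite (le_trans (ler_norm C)) // lerDl.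
have [d d0 Hd] := differentiable_remainder dG (divr_gt0 e0 C1).
exists (d / (`|C| + 1)); first by rewrite divr_gt0.
move=> h hd; apply: (le_trans (Hd _ _)).
  by apply: (le_lt_trans (zC1 h)); rewrite mulrC -ltr_pdivlMr.
apply: (le_trans (ler_wpM2l _ (zC1 h))); first by rewrite ltW ?divr_gt0.
by rewrite mulrA divfK ?gt_eqF.
Qed.

Lemma differentiable_of_quadratic_close (F F' : V -> W) x C :
  differentiable F' x ->
  (forall h, `|F (x + h) - F x - (F' (x + h) - F' x)| <= C * `|h| ^+ 2) ->
  differentiable F x /\ 'd F x = 'd F' x :> (V -> W).
Proof.
move=> dF' close; apply: differentiable_of_remainder; first exact: diff_continuous.
move=> e e0.
have e2 : 0 < e / 2 by rewrite divr_gt0.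
have C1 : 0 < `|C| + 1 by rewrite ltr_pwDr.
have [d d0 Hd] := differentiable_remainder dF' e2.
exists (Num.min d (e / 2 / (`|C| + 1))); first by rewrite lt_min d0 divr_gt0.
move=> h; rewrite lt_min => /andP[hd hC].
have Ch : `|C| * `|h| <= e / 2.
  apply: (le_trans (ler_wpM2l (normr_ge0 C) (ltW hC))).
  by rewrite mulrCA ler_piMr ?(ltW e2) // ler_pdivrMr // mul1r lerDl.
have quad : C * `|h| ^+ 2 <= e / 2 * `|h|.
  rewrite expr2 mulrA ler_wpM2r //; apply: le_trans Ch.
  by rewrite ler_wpM2r // ler_norm.
have -> : F (x + h) - F x - 'd F' x h =
    (F (x + h) - F x - (F' (x + h) - F' x)) + (F' (x + h) - F' x - 'd F' x h).
  by rewrite addrA subrK.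
apply: (le_trans (ler_normD _ _)); rewrite [e]splitr mulrDl.
by apply: lerD; [exact: le_trans (close h) quad | exact: Hd].
Qed.

Lemma diff_quotient_cvg (G : V -> W) p w : differentiable G p ->
  (fun t : R => t^-1 *: (G (t *: w + p) - G p)) @ 0^' --> 'd G p w.
Proof. by move=> dG; rewrite -deriveE //; exact: diff_derivable. Qed.

Lemma diff_quotient_le (G : V -> W) p w (N : W -> R) c K :
  differentiable G p -> continuous N ->
  (forall t, 0 < t < 1 -> N (t^-1 *: (G (t *: w + p) - G p)) <= c + K * t) ->
  N ('d G p w) <= c.
Proof.
move=> dG Nc hb.
have cv_right : (fun t : R => t^-1 *: (G (t *: w + p) - G p)) @ 0^'+ --> 'd G p w.
  apply: cvg_trans (diff_quotient_cvg (w := w) dG); apply: cvg_app.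
  by apply: within_subset => t /= /gt_eqF ->.
have cv : (fun t => N (t^-1 *: (G (t *: w + p) - G p)) - K * t) @ 0^'+
    --> N ('d G p w) - K * 0.
  apply: cvgB; first exact: (continuous_cvg _ (Nc _)) cv_right.
  by apply: cvgMr; apply: cvg_at_right_filter; exact: cvg_id.
rewrite mulr0 subr0 in cv; apply: (cvgr_to_le cv); near=> t.
rewrite lerBlDr; apply: hb; apply/andP; split; near: t; first exact: nbhs_right_gt.
exact: nbhs_right_lt.
Unshelve. all: by end_near. Qed.

End Calculus.

Section DirectionalDerivatives.
Variables (R : realType) (U V W : normedModType R).

Lemma derive_along_line (g : U -> R) a v (G : V -> W) p w (pi : W -> R) :
  differentiable G p -> continuous pi -> {morph pi : z1 z2 / z1 - z2} ->
  (forall s z, pi (s *: z) = s * pi z) ->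
  (forall t, g (t *: v + a) = pi (G (t *: w + p))) -> g a = pi (G p) ->
  derive g a v = pi ('d G p w).
Proof.
move=> dG pic piB piZ gG ga; apply: cvg_lim => //.
have -> : (fun h : R => h^-1 *: ((g \o shift a) (h *: v) - g a)) =
    pi \o (fun t : R => t^-1 *: (G (t *: w + p) - G p)).
  by apply: funext => t; rewrite /= piZ piB gG ga.
exact: (continuous_cvg _ (pic _)) (diff_quotient_cvg (w := w) dG).
Qed.

End DirectionalDerivatives.

Section PartialDerivatives.
Variables (R : realType) (U V W : normedModType R).

Lemma derive_slice1 (H : U * V -> W) (pi : W -> R) x y v :
  differentiable H (x, y) -> continuous pi -> {morph pi : z1 z2 / z1 - z2} ->
  (forall s z, pi (s *: z) = s * pi z) ->
  derive (fun x' => pi (H (x', y))) x v = pi ('d H (x, y) (v, 0)).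
Proof.
move=> dH pic piB piZ.
apply: (derive_along_line (p := (x, y)) (w := (v, 0))) => // t.
by rewrite -[t *: (v, 0) + _]/(t *: v + x, t *: 0 + y) scaler0 add0r.
Qed.

Lemma derive_slice2 (H : U * V -> W) (pi : W -> R) x y v :
  differentiable H (x, y) -> continuous pi -> {morph pi : z1 z2 / z1 - z2} ->
  (forall s z, pi (s *: z) = s * pi z) ->
  derive (fun y' => pi (H (x, y'))) y v = pi ('d H (x, y) (0, v)).
Proof.
move=> dH pic piB piZ.
apply: (derive_along_line (p := (x, y)) (w := (0, v))) => // t.
by rewrite -[t *: (0, v) + _]/(t *: 0 + x, t *: v + y) scaler0 add0r.
Qed.

End PartialDerivatives.

Lemma fst_sum (U V : nmodType) I (r : seq I) (F : I -> U * V) :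
  (\sum_(i <- r) F i).1 = \sum_(i <- r) (F i).1.
Proof. exact: (big_morph (fun z : U * V => z.1)). Qed.

Lemma snd_sum (U V : nmodType) I (r : seq I) (F : I -> U * V) :
  (\sum_(i <- r) F i).2 = \sum_(i <- r) (F i).2.
Proof. exact: (big_morph (fun z : U * V => z.2)). Qed.

Lemma col_sum_ebasis (R : realType) k (a : 'cV[R]_k) : a = \sum_i a i 0 *: ebasis R i.
Proof.
by rewrite {1}(matrix_sum_delta a); apply: eq_bigr => i _; rewrite big_ord1.
Qed.

Lemma mulmx_ebasis (R : realType) p k (M : 'M[R]_(p, k)) i j :
  (M *m ebasis R j) i 0 = M i j.
Proof. by rewrite -colE mxE. Qed.

Section JointDerivatives.
Variables (R : realType) (m n : nat) (f : 'cV[R]_m -> 'cV[R]_n -> R).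
Hypothesis dF : forall p, differentiable (fjoint f) p.
Hypothesis dG : forall p, differentiable (gradjoint f) p.

Local Notation F := (fjoint f).
Local Notation G := (gradjoint f).
Local Notation PT := ('cV[R]_m * 'cV[R]_n)%type.

Lemma fst_entry_continuous i : continuous (fun z : PT => z.1 i 0).
Proof.
move=> z; apply: (@continuous_comp _ _ _ fst (fun M : 'cV[R]_m => M i 0)).
  exact: fst_continuous.
exact: coord_continuous.
Qed.

Lemma snd_entry_continuous i : continuous (fun z : PT => z.2 i 0).
Proof.
move=> z; apply: (@continuous_comp _ _ _ snd (fun M : 'cV[R]_n => M i 0)).
  exact: snd_continuous.
exact: coord_continuous.
Qed.

Lemma grad1_diff x y i : grad1 f x y i 0 = 'd F (x, y) (ebasis R i, 0).
Proof.
rewrite /grad1 mxE; apply: (derive_slice1 (H := F) (pi := id)) => // ?.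
exact: cvg_id.
Qed.

Lemma grad2_diff x y i : grad2 f x y i 0 = 'd F (x, y) (0, ebasis R i).
Proof.
rewrite /grad2 mxE; apply: (derive_slice2 (H := F) (pi := id)) => // ?.
exact: cvg_id.
Qed.

Lemma hess11_diff x y i k : hess11 f x y i k = ('d G (x, y) (ebasis R k, 0)).1 i 0.
Proof.
rewrite /hess11 mxE.
apply: (derive_slice1 (H := G) (pi := fun z : PT => z.1 i 0)) => //.
- exact: fst_entry_continuous.
- by move=> a b; rewrite !mxE.
- by move=> s a; rewrite !mxE.
Qed.

Lemma hess12_diff x y i k : hess12 f x y i k = ('d G (x, y) (0, ebasis R k)).1 i 0.
Proof.
rewrite /hess12 mxE.
apply: (derive_slice2 (H := G) (pi := fun z : PT => z.1 i 0)) => //.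
- exact: fst_entry_continuous.
- by move=> a b; rewrite !mxE.
- by move=> s a; rewrite !mxE.
Qed.

Lemma hess21_diff x y i k : hess21 f x y i k = ('d G (x, y) (ebasis R k, 0)).2 i 0.
Proof.
rewrite /hess21 mxE.
apply: (derive_slice1 (H := G) (pi := fun z : PT => z.2 i 0)) => //.
- exact: snd_entry_continuous.
- by move=> a b; rewrite !mxE.
- by move=> s a; rewrite !mxE.
Qed.

Lemma hess22_diff x y i k : hess22 f x y i k = ('d G (x, y) (0, ebasis R k)).2 i 0.
Proof.
rewrite /hess22 mxE.
apply: (derive_slice2 (H := G) (pi := fun z : PT => z.2 i 0)) => //.
- exact: snd_entry_continuous.
- by move=> a b; rewrite !mxE.
- by move=> s a; rewrite !mxE.
Qed.

Lemma pair_sum_ebasis (a : 'cV[R]_m) (b : 'cV[R]_n) :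
  (a, b) = \sum_k a k 0 *: (ebasis R k, 0 : 'cV[R]_n)
         + \sum_j b j 0 *: (0 : 'cV[R]_m, ebasis R j).
Proof.
apply/eqP; rewrite xpair_eqE /= !fst_sum !snd_sum /=.
under [X in _ == _ + X]eq_bigr do rewrite scaler0.
under [X in _ && (_ == X + _)]eq_bigr do rewrite scaler0.
by rewrite !big1_eq addr0 add0r -!col_sum_ebasis !eqxx.
Qed.

Lemma linear_pairE (W : normedModType R) (L : {linear PT -> W}) a b :
  L (a, b) = \sum_k a k 0 *: L (ebasis R k, 0) + \sum_j b j 0 *: L (0, ebasis R j).
Proof.
rewrite {1}pair_sum_ebasis linearD !linear_sum.
by congr (_ + _); apply: eq_bigr => i _; rewrite linearZ.
Qed.

Lemma diff_fjoint x y a b :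
  'd F (x, y) (a, b) = dot (grad1 f x y) a + dot (grad2 f x y) b.
Proof.
rewrite linear_pairE; congr (_ + _); apply: eq_bigr => i _.
  by rewrite grad1_diff mulrC.
by rewrite grad2_diff mulrC.
Qed.

Lemma diff_gradjoint1 x y a b :
  ('d G (x, y) (a, b)).1 = hess11 f x y *m a + hess12 f x y *m b.
Proof.
apply/matrixP => i j; rewrite (ord1 j) linear_pairE /= !fst_sum !mxE !summxE.
by congr (_ + _); apply: eq_bigr => k _;
  rewrite [LHS]mxE mulrC ?hess11_diff ?hess12_diff.
Qed.

Lemma diff_gradjoint2 x y a b :
  ('d G (x, y) (a, b)).2 = hess21 f x y *m a + hess22 f x y *m b.
Proof.
apply/matrixP => i j; rewrite (ord1 j) linear_pairE /= !snd_sum !mxE !summxE.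
by congr (_ + _); apply: eq_bigr => k _;
  rewrite [LHS]mxE mulrC ?hess21_diff ?hess22_diff.
Qed.

End JointDerivatives.

Lemma enorm_continuous (R : realType) k : continuous (@enorm R k).
Proof.
apply: (lipschitz_continuous (C := k%:R)) => a b.
exact: le_trans (enorm_dist_dist a b) (enorm_le_norm _).
Qed.

Lemma dot_continuous (R : realType) k (v : 'cV[R]_k) : continuous (fun u => dot u v).
Proof.
apply: (lipschitz_continuous (C := k%:R * enorm v)) => a b.
rewrite -dotBl (le_trans (dot_cauchy_schwarz _ _)) // mulrAC.
by rewrite ler_wpM2r ?enorm_ge0 ?enorm_le_norm.
Qed.

Section StrongConcavity.
Variables (R : realType) (m n : nat) (f : 'cV[R]_m -> 'cV[R]_n -> R).
Variables (L1 mu : R) (ystar : 'cV[R]_m -> 'cV[R]_n).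
Hypothesis dF : forall p, differentiable (fjoint f) p.
Hypothesis dG : forall p, differentiable (gradjoint f) p.
Hypothesis gradL : forall x y x' y',
  pnorm (grad1 f x y - grad1 f x' y') (grad2 f x y - grad2 f x' y')
    <= L1 * pnorm (x - x') (y - y').
Hypothesis mu_gt0 : 0 < mu.
Hypothesis SC : forall x, strongly_concave mu (f x).
Hypothesis ystar_max : forall x y, f x y <= f x (ystar x).

Local Notation F := (fjoint f).
Local Notation G := (gradjoint f).
Local Notation PT := ('cV[R]_m * 'cV[R]_n)%type.

Lemma strongly_concave_first_order x a b :
  f x a <= f x b + dot (grad2 f x b) (a - b) - mu / 2 * enorm (a - b) ^+ 2.
Proof.
set d := a - b.
suff : f x a - f x b + mu / 2 * enorm d ^+ 2 <= 'd F (x, b) (0, d).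
  by rewrite diff_fjoint // dot0r add0r; lra.
rewrite -lerN2.
apply: (diff_quotient_le (N := -%R) (K := mu / 2 * enorm d ^+ 2) (dF (x, b))).
  exact: oppr_continuous.
move=> t /andP[t0 t1].
rewrite -[t *: (0, d) + _]/(t *: 0 + x, t *: d + b) scaler0 add0r /fjoint /=.
have := SC x a b (introT andP (conj (ltW t0) (ltW t1))).
have -> : t *: a + (1 - t) *: b = t *: d + b.
  by rewrite /d scalerBl scale1r scalerBr addrCA addrC.
rewrite -/d => h.
rewrite -[t^-1 *: _]/(t^-1 * _) mulrC -mulNr ler_pdivrMr //; nra.
Qed.

Lemma grad2_ystar x : grad2 f x (ystar x) = 0.
Proof.
set y0 := ystar x; set g := grad2 f x y0.
have : 'd F (x, y0) (0, g) <= 0.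
  apply: (diff_quotient_le (N := id) (K := 0) (dF (x, y0))) => [? | t /andP[t0 _]].
    exact: cvg_id.
  rewrite -[t *: (0, g) + _]/(t *: 0 + x, t *: g + y0) scaler0 add0r mul0r addr0.
  by rewrite /fjoint /= pmulr_rle0 ?invr_gt0 // subr_le0.
rewrite diff_fjoint // dot0r add0r -enorm_sqr => g0.
by apply: enorm_eq0; apply/eqP; rewrite -sqrf_eq0 eq_le g0 sqr_ge0.
Qed.

Lemma grad2_strongly_monotone x a b :
  dot (grad2 f x a - grad2 f x b) (a - b) <= - mu * enorm (a - b) ^+ 2.
Proof.
have h1 := strongly_concave_first_order x a b.
have := strongly_concave_first_order x b a.
rewrite enorm_distC -(opprB a b) dotNr dotBl; lra.
Qed.

Lemma ystar_lipschitz x x' :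
  enorm (ystar x - ystar x') <= `|L1| / mu * enorm (x - x').
Proof.
set d := ystar x - ystar x'.
have h1 := grad2_strongly_monotone x (ystar x) (ystar x').
rewrite grad2_ystar sub0r dotNl -/d in h1.
have h2 : dot (grad2 f x (ystar x')) d <= `|L1| * enorm (x - x') * enorm d.
  rewrite -[grad2 f x _]subr0 -(grad2_ystar x').
  apply: (le_trans (dot_le_enorm _ _)); rewrite ler_wpM2r ?enorm_ge0 //.
  apply: (le_trans (enorm_le_pnormr (grad1 f x (ystar x') - grad1 f x' (ystar x')) _)).
  apply: (le_trans (gradL _ _ _ _)); rewrite subrr pnorm0r.
  by rewrite ler_wpM2r ?enorm_ge0 ?ler_norm.
have [d0|dn0] := eqVneq d 0.
  by rewrite d0 enorm0 mulr_ge0 ?enorm_ge0 // divr_ge0 // ltW.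
have dp := enorm_gt0 dn0.
have : mu * enorm d <= `|L1| * enorm (x - x').
  by rewrite -(ler_pM2r dp) -mulrA -expr2; lra.
by rewrite mulrAC ler_pdivlMr // mulrC.
Qed.

Lemma hess22_negdef x y v : dot (hess22 f x y *m v) v <= - mu * enorm v ^+ 2.
Proof.
have -> : hess22 f x y *m v = ('d G (x, y) (0, v)).2.
  by rewrite diff_gradjoint2 // mulmx0 add0r.
apply: (diff_quotient_le (N := fun z : PT => dot z.2 v) (K := 0) (dG (x, y))).
  move=> z; apply: (@continuous_comp _ _ _ snd (fun u => dot u v)).
    exact: snd_continuous.
  exact: dot_continuous.
move=> t /andP[t0 _]; rewrite mul0r addr0.
rewrite -[t *: (0, v) + _]/(t *: 0 + x, t *: v + y) scaler0 add0r /= dotZl.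
have := grad2_strongly_monotone x (t *: v + y) y.
rewrite addrK dotZr enormZ gtr0_norm // => h.
rewrite -(ler_pM2l t0) mulrA mulfV ?gt_eqF // mul1r; nra.
Qed.

Lemma opnorm_hess12_le x y : 0 <= L1 -> opnorm (hess12 f x y) <= L1.
Proof.
move=> L1_ge0; apply: opnorm_le => // v.
have -> : hess12 f x y *m v = ('d G (x, y) (0, v)).1.
  by rewrite diff_gradjoint1 // mulmx0 add0r.
apply: (diff_quotient_le (N := fun z : PT => enorm z.1) (K := 0) (dG (x, y))).
  move=> z; apply: (@continuous_comp _ _ _ fst (@enorm R m)).
    exact: fst_continuous.
  exact: enorm_continuous.
move=> t /andP[t0 _]; rewrite mul0r addr0.
rewrite -[t *: (0, v) + _]/(t *: 0 + x, t *: v + y) scaler0 add0r /=.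
rewrite enormZ gtr0_norm ?invr_gt0 // mulrC ler_pdivrMr //.
apply: (le_trans (enorm_le_pnorml _ (grad2 f x (t *: v + y) - grad2 f x y))).
apply: (le_trans (gradL _ _ _ _)); rewrite subrr pnorm0l addrK enormZ gtr0_norm //.
by rewrite [t * _]mulrC mulrA.
Qed.

Lemma opnorm_hess21_le x y : 0 <= L1 -> opnorm (hess21 f x y) <= L1.
Proof.
move=> L1_ge0; apply: opnorm_le => // v.
have -> : hess21 f x y *m v = ('d G (x, y) (v, 0)).2.
  by rewrite diff_gradjoint2 // mulmx0 addr0.
apply: (diff_quotient_le (N := fun z : PT => enorm z.2) (K := 0) (dG (x, y))).
  move=> z; apply: (@continuous_comp _ _ _ snd (@enorm R n)).
    exact: snd_continuous.
  exact: enorm_continuous.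
move=> t /andP[t0 _]; rewrite mul0r addr0.
rewrite -[t *: (v, 0) + _]/(t *: v + x, t *: 0 + y) scaler0 add0r /=.
rewrite enormZ gtr0_norm ?invr_gt0 // mulrC ler_pdivrMr //.
apply: (le_trans (enorm_le_pnormr (grad1 f (t *: v + x) y - grad1 f x y) _)).
apply: (le_trans (gradL _ _ _ _)); rewrite subrr pnorm0r addrK enormZ gtr0_norm //.
by rewrite [t * _]mulrC mulrA.
Qed.

End StrongConcavity.

Section NegativeDefinite.
Variables (R : realType) (k : nat) (A : 'M[R]_k) (mu : R).
Hypothesis mu_gt0 : 0 < mu.
Hypothesis A_negdef : forall v, dot (A *m v) v <= - mu * enorm v ^+ 2.

Lemma negdef_unitmx : A \in unitmx.
Proof.
have A_inj (v : 'cV[R]_k) : A *m v = 0 -> v = 0.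
  move=> Av; have := A_negdef v; rewrite Av dot0l => hv.
  apply: enorm_eq0; apply/eqP; rewrite -sqrf_eq0 eq_le sqr_ge0 andbT.
  by rewrite -(ler_pM2l mu_gt0) mulr0; lra.
rewrite -unitmx_tr -row_free_unit -kermx_eq0; apply/eqP/matrixP => i j.
have /matrixP /(_ j 0) : (row i (kermx A^T))^T = 0.
  apply: A_inj; rewrite -[A in A *m _]trmxK -trmx_mul -row_mul mulmx_ker.
  by apply/matrixP => a b; rewrite !mxE.
by rewrite !mxE.
Qed.

Lemma enorm_invmx_negdef w : enorm (invmx A *m w) <= mu^-1 * enorm w.
Proof.
set v := invmx A *m w.
have := A_negdef v; rewrite /v mulKVmx ?negdef_unitmx // -/v => hv.
have := dot_cauchy_schwarz w v; rewrite ler_norml => /andP[cs _].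
rewrite mulrC ler_pdivlMr //.
have [v0|vn0] := eqVneq v 0; first by rewrite v0 enorm0 mul0r enorm_ge0.
rewrite -(ler_pM2r (enorm_gt0 vn0)); nra.
Qed.

Lemma opnorm_invmx_negdef : opnorm (invmx A) <= mu^-1.
Proof. by apply: opnorm_le; [rewrite invr_ge0 ltW | exact: enorm_invmx_negdef]. Qed.

End NegativeDefinite.

Lemma schur_complement_lipschitz (R : realType) p q (H H' : 'M[R]_p)
    (X X' : 'M[R]_(p, q)) (A A' : 'M[R]_q) (Z Z' : 'M[R]_(q, p)) (l1 l2 mu d : R) :
  0 < mu -> A \in unitmx -> A' \in unitmx ->
  opnorm (invmx A) <= mu^-1 -> opnorm (invmx A') <= mu^-1 ->
  opnorm X' <= l1 -> opnorm Z <= l1 ->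
  opnorm (H - H') <= l2 * d -> opnorm (X - X') <= l2 * d ->
  opnorm (Z - Z') <= l2 * d -> opnorm (A - A') <= l2 * d ->
  opnorm ((H - X *m invmx A *m Z) - (H' - X' *m invmx A' *m Z'))
    <= l2 * (1 + l1 / mu) ^+ 2 * d.
Proof.
move=> mu_gt0 Au A'u iA iA' hX hZ dH dX dZ dA.
have dinv : invmx A - invmx A' = invmx A *m (A' - A) *m invmx A'.
  by rewrite mulmxBr mulmxBl mulVmx // mul1mx -mulmxA mulmxV // mulmx1.
set P := X *m invmx A *m Z; set P' := X' *m invmx A' *m Z'.
(* telescope [P - P'] through [X' A^-1 Z] and [X' A'^-1 Z] *)
have -> : (H - P) - (H' - P') =
    (H - H') - ((X - X') *m invmx A *m Z + X' *m (invmx A - invmx A') *m Z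
                + X' *m invmx A' *m (Z - Z')).
  rewrite !mulmxBl !mulmxBr !mulmxBl !addrA !subrK -/P -/P'.
  by rewrite [in LHS]opprB [in RHS]opprB [LHS]addrACA [RHS]addrACA [- H' - P]addrC.
have b1 : opnorm ((X - X') *m invmx A *m Z) <= l2 * d * mu^-1 * l1.
  exact: opnorm_mulmx3_le.
have b2 : opnorm (X' *m (invmx A - invmx A') *m Z)
    <= l1 * (mu^-1 * (l2 * d) * mu^-1) * l1.
  apply: opnorm_mulmx3_le => //; rewrite dinv; apply: opnorm_mulmx3_le => //.
  by rewrite -opnormN opprB.
have b3 : opnorm (X' *m invmx A' *m (Z - Z')) <= l1 * mu^-1 * (l2 * d).
  exact: opnorm_mulmx3_le.
have t1 := opnormD (H - H') (- ((X - X') *m invmx A *m Z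
  + X' *m (invmx A - invmx A') *m Z + X' *m invmx A' *m (Z - Z'))).
rewrite opnormN in t1.
have t2 := opnormD ((X - X') *m invmx A *m Z + X' *m (invmx A - invmx A') *m Z)
  (X' *m invmx A' *m (Z - Z')).
have t3 := opnormD ((X - X') *m invmx A *m Z) (X' *m (invmx A - invmx A') *m Z).
have -> : l2 * (1 + l1 / mu) ^+ 2 * d = l2 * d + l2 * d * mu^-1 * l1
    + l1 * (mu^-1 * (l2 * d) * mu^-1) * l1 + l1 * mu^-1 * (l2 * d).
  by field; rewrite gt_eqF.
lra.
Qed.

Lemma ebasis_neq0 (R : realType) k (i : 'I_k) : ebasis R i != 0.
Proof. by apply/eqP => /matrixP /(_ i 0); rewrite !mxE !eqxx => /eqP; rewrite oner_eq0. Qed.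

Lemma exists_pnorm_gt0 (R : realType) m n : (0 < m + n)%N ->
  exists (x : 'cV[R]_m) (y : 'cV[R]_n), 0 < pnorm x y.
Proof.
case: m => [|m] mn.
  by exists 0, (ebasis R (Ordinal mn)); rewrite pnorm0l enorm_gt0 ?ebasis_neq0.
by exists (ebasis R ord0), 0; rewrite pnorm0r enorm_gt0 ?ebasis_neq0.
Qed.

Section Envelope.
Variables (R : realType) (m n : nat) (f : 'cV[R]_m -> 'cV[R]_n -> R).
Variables (L1 L2 mu : R) (ystar : 'cV[R]_m -> 'cV[R]_n).
Hypothesis dF : forall p, differentiable (fjoint f) p.
Hypothesis dG : forall p, differentiable (gradjoint f) p.
Hypothesis gradL : forall x y x' y',
  pnorm (grad1 f x y - grad1 f x' y') (grad2 f x y - grad2 f x' y')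
    <= L1 * pnorm (x - x') (y - y').
Hypothesis mu_gt0 : 0 < mu.
Hypothesis SC : forall x, strongly_concave mu (f x).
Hypothesis ystar_max : forall x y, f x y <= f x (ystar x).
Hypothesis hessL : forall x y x' y',
  opnorm (hess11 f x y - hess11 f x' y') <= L2 * pnorm (x - x') (y - y') /\
  opnorm (hess12 f x y - hess12 f x' y') <= L2 * pnorm (x - x') (y - y') /\
  opnorm (hess21 f x y - hess21 f x' y') <= L2 * pnorm (x - x') (y - y') /\
  opnorm (hess22 f x y - hess22 f x' y') <= L2 * pnorm (x - x') (y - y').

Local Notation F := (fjoint f).
Local Notation G := (gradjoint f).
Local Notation PT := ('cV[R]_m * 'cV[R]_n)%type.

Lemma Gmat_lipschitz x y x' y' : 0 <= L1 ->
  opnorm (Gmat f x y - Gmat f x' y')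
    <= L2 * (1 + L1 / mu) ^+ 2 * pnorm (x - x') (y - y').
Proof.
move=> L1_ge0; have [h11 [h12 [h21 h22]]] := hessL x y x' y'.
have negdef := hess22_negdef dF dG SC.
exact: (schur_complement_lipschitz mu_gt0
  (negdef_unitmx mu_gt0 (negdef x y)) (negdef_unitmx mu_gt0 (negdef x' y'))
  (opnorm_invmx_negdef mu_gt0 (negdef x y)) (opnorm_invmx_negdef mu_gt0 (negdef x' y'))
  (opnorm_hess12_le dG gradL x' y' L1_ge0) (opnorm_hess21_le dG gradL x y L1_ge0)
  h11 h12 h21 h22).
Qed.

Lemma Phi_ystar x : Phi f x = f x (ystar x).
Proof.
have ub : ubound (range (f x)) (f x (ystar x)) by move=> _ [y _ <-].
apply/eqP; rewrite eq_le; apply/andP; split.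
  by apply: ge_sup => //; exists (f x (ystar x)), (ystar x).
by apply: sup_upper_bound; [split; [exists (f x (ystar x)), (ystar x) | exists (f x (ystar x))] | exists (ystar x)].
Qed.

Lemma Phi_increment x h :
  0 <= Phi f (x + h) - Phi f x - (f (x + h) (ystar x) - f x (ystar x))
    <= `|L1| * (`|L1| / mu) * enorm h ^+ 2.
Proof.
rewrite !Phi_ystar; set y0 := ystar x; set y1 := ystar (x + h).
have lo : f (x + h) y0 <= f (x + h) y1 := ystar_max _ _.
have g2 : enorm (grad2 f (x + h) y0) <= `|L1| * enorm h.
  rewrite -[grad2 f (x + h) y0]subr0 -(grad2_ystar dF ystar_max x).
  apply: (le_trans (enorm_le_pnormr (grad1 f (x + h) y0 - grad1 f x y0) _)).
  apply: (le_trans (gradL _ _ _ _)); rewrite subrr pnorm0r [x + h - x]addrAC subrr add0r.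
  by rewrite ler_wpM2r ?enorm_ge0 ?ler_norm.
have dy : enorm (y1 - y0) <= `|L1| / mu * enorm h.
  by have := ystar_lipschitz dF gradL mu_gt0 SC ystar_max (x + h) x; rewrite [x + h - x]addrAC subrr add0r.
have := strongly_concave_first_order dF SC (x + h) y1 y0.
have : dot (grad2 f (x + h) y0) (y1 - y0) <= `|L1| * (`|L1| / mu) * enorm h ^+ 2.
  apply: (le_trans (dot_le_enorm _ _)).
  by apply: (le_trans (ler_pM (enorm_ge0 _) (enorm_ge0 _) g2 dy)); rewrite expr2 mulrACA.
have : 0 <= mu / 2 * enorm (y1 - y0) ^+ 2 by rewrite mulr_ge0 ?sqr_ge0 // divr_ge0 // ltW.
by move=> *; apply/andP; split; lra.
Qed.

Lemma differentiable_slice1 x y : differentiable (fun x' => f x' y) x.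
Proof.
have : is_diff x (fun x' => (x', y)) (fun h => (h, 0)) by exact: is_diff_pair.
by move=> ?; apply: (@differentiable_comp _ _ _ _ (fun x' => (x', y)) F).
Qed.

Lemma diff_Phi x : differentiable (Phi f) x /\
  'd (Phi f) x = 'd (fun x' => f x' (ystar x)) x :> (_ -> _).
Proof.
apply: (differentiable_of_quadratic_close (C := `|L1| * (`|L1| / mu) * m%:R ^+ 2)).
  exact: differentiable_slice1.
move=> h; have /andP[lo up] := Phi_increment x h.
rewrite ger0_norm //; apply: (le_trans up); rewrite -[leRHS]mulrA; apply: ler_wpM2l.
  by rewrite mulr_ge0 // divr_ge0 // ltW.
by rewrite -exprMn lerXn2r ?nnegrE ?enorm_ge0 ?mulr_ge0 ?enorm_le_norm.
Qed.

Lemma gradx_Phi x : gradx (Phi f) x = grad1 f x (ystar x).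
Proof.
have [dPhi DPhi] := diff_Phi x.
apply/matrixP => i j; rewrite (ord1 j) !mxE (deriveE _ dPhi) DPhi -deriveE //.
exact: differentiable_slice1.
Qed.

Definition ystar_jacobian x : 'M[R]_(n, m) :=
  - (invmx (hess22 f x (ystar x)) *m hess21 f x (ystar x)).

Lemma ystar_increment x h :
  ystar (x + h) - ystar x - ystar_jacobian x *m h =
  - (invmx (hess22 f x (ystar x)) *m
      (G ((x, ystar x) + (h, ystar (x + h) - ystar x)) - G (x, ystar x)
       - 'd G (x, ystar x) (h, ystar (x + h) - ystar x)).2).
Proof.
set y0 := ystar x; set d := ystar (x + h) - y0.
have Hu := negdef_unitmx mu_gt0 (hess22_negdef dF dG SC x y0).
have -> : (G ((x, y0) + (h, d)) - G (x, y0) - 'd G (x, y0) (h, d)).2 =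
    - (hess21 f x y0 *m h + hess22 f x y0 *m d).
  (* [grad2 f] vanishes at both [(x, y* x)] and [(x + h, y* (x + h))] *)
  rewrite /= /d [y0 + _]addrC subrK (grad2_ystar dF ystar_max (x + h)).
  by rewrite (grad2_ystar dF ystar_max x) subrr sub0r diff_gradjoint2.
rewrite mulmxN opprK mulmxDr mulKmx // /ystar_jacobian mulNmx opprK mulmxA.
by rewrite addrC.
Qed.

Lemma diff_ystar x :
  differentiable ystar x /\ 'd ystar x = mulmx (ystar_jacobian x) :> (_ -> _).
Proof.
set y0 := ystar x.
have negdef := hess22_negdef dF dG SC x y0.
apply: differentiable_of_remainder.
  apply: (linear_continuous_of_bound (C := opnorm (ystar_jacobian x) * m%:R)) => h.
  apply: (le_trans (norm_le_enorm _)); apply: (le_trans (enorm_mulmx_le _ _)).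
  by rewrite -mulrA ler_wpM2l ?opnorm_ge0 ?enorm_le_norm.
move=> e e_gt0.
have graph_lip h : `|(h, ystar (x + h) - y0)| <= (1 + `|L1| / mu * m%:R) * `|h|.
  have L1mu : 0 <= `|L1| / mu by rewrite divr_ge0 // ltW.
  rewrite prod_normE ge_max; apply/andP; split.
    by rewrite mulrDl mul1r lerDl mulr_ge0 // mulr_ge0.
  apply: (le_trans (norm_le_enorm _)).
  apply: (le_trans (ystar_lipschitz dF gradL mu_gt0 SC ystar_max _ _)).
  rewrite [x + h - x]addrAC subrr add0r mulrDl mul1r; apply: ler_wpDl => //.
  by rewrite -[leRHS]mulrA; apply: ler_wpM2l => //; exact: enorm_le_norm.
have n1_gt0 : (0 : R) < n%:R + 1 by rewrite natr1 ltr0n.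
have e'_gt0 : 0 < e * mu / (n%:R + 1) by rewrite !mulr_gt0 ?invr_gt0.
have [d d_gt0 Hd] := differentiable_remainder_comp (dG (x, y0)) graph_lip e'_gt0.
exists d => // h /Hd rem_le.
rewrite ystar_increment normrN; apply: (le_trans (norm_le_enorm _)).
apply: (le_trans (enorm_invmx_negdef mu_gt0 negdef _)).
have rem2_le : enorm (G ((x, y0) + (h, ystar (x + h) - y0)) - G (x, y0)
      - 'd G (x, y0) (h, ystar (x + h) - y0)).2
    <= n%:R * (e * mu / (n%:R + 1) * `|h|).
  apply: (le_trans (enorm_le_norm _)); rewrite ler_wpM2l //.
  by apply: le_trans rem_le; rewrite [leRHS]prod_normE le_max lexx orbT.
apply: (le_trans (ler_wpM2l _ rem2_le)); first by rewrite invr_ge0 ltW.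
have -> : mu^-1 * (n%:R * (e * mu / (n%:R + 1) * `|h|)) =
    e * (n%:R / (n%:R + 1)) * `|h|.
  by field; rewrite !gt_eqF.
by rewrite ler_wpM2r // ler_piMr ?ltW // ltr_pdivrMr // mul1r ltrDl.
Qed.

Lemma diff_ystar_graph x :
  differentiable (fun x' => (x', ystar x')) x /\
  'd (fun x' => (x', ystar x')) x = (fun h => (h, ystar_jacobian x *m h)) :> (_ -> _).
Proof.
have [dy Dy] := diff_ystar x.
have : is_diff x ystar (mulmx (ystar_jacobian x)) by exact: DiffDef.
have : is_diff x (fun x' => (x', ystar x')) (fun h => (h, ystar_jacobian x *m h)).
  exact: is_diff_pair.
by move=> ? _; split; [exact: ex_diff | exact: diff_val].
Qed.

Lemma differentiable_gradx_Phi x : differentiable (gradx (Phi f)) x.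
Proof.
have -> : gradx (Phi f) = fst \o (G \o (fun x' => (x', ystar x'))).
  by apply: funext => x'; rewrite /= gradx_Phi.
apply: differentiable_comp; last exact/linear_differentiable/fst_continuous.
by apply: differentiable_comp; [exact: (diff_ystar_graph x).1 | exact: dG].
Qed.

Lemma hessx_Phi x : hessx (Phi f) x = Gmat f x (ystar x).
Proof.
have [dgraph Dgraph] := diff_ystar_graph x.
apply/matrixP => i k; rewrite /hessx mxE.
rewrite (derive_along_line (G := G \o (fun x' => (x', ystar x'))) (p := x)
  (w := ebasis R k) (pi := fun z : PT => z.1 i 0)).
- rewrite diff_comp // Dgraph /= diff_gradjoint1 // mulmxA -mulmxDl mulmx_ebasis.
  by rewrite /Gmat /ystar_jacobian mulmxN mulmxA.
- exact: differentiable_comp.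
- exact: fst_entry_continuous.
- by move=> a b; rewrite !mxE.
- by move=> s a; rewrite !mxE.
- by move=> t; rewrite gradx_Phi.
- by rewrite gradx_Phi.
Qed.

Lemma pnorm_ystar_le x x' :
  pnorm (x - x') (ystar x - ystar x') <= (1 + `|L1| / mu) * enorm (x - x').
Proof.
apply: (le_trans (pnorm_le_add _ _)); rewrite mulrDl mul1r lerD2l.
exact: ystar_lipschitz.
Qed.

End Envelope.

Theorem proposition2 (R : realType) (m n : nat)
  (f : 'cV[R]_m -> 'cV[R]_n -> R) (L1 L2 mu : R)
  (ystar : 'cV[R]_m -> 'cV[R]_n) :
  standing_assumption f L1 L2 mu ->
  (forall x y, f x y <= f x (ystar x)) ->
  let kappa := L1 / mu in
  (* (1) G is Lipschitz with L_G = L2 (1 + kappa)^2 *)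
  (forall x y x' y',
     opnorm (Gmat f x y - Gmat f x' y')
       <= L2 * (1 + kappa) ^+ 2 * pnorm (x - x') (y - y')) /\
  (* (2) Phi is twice differentiable, Hessian = G(x, y*(x)), Lipschitz *)
  (forall x, differentiable (Phi f) x) /\
  (forall x, differentiable (gradx (Phi f)) x) /\
  (forall x, hessx (Phi f) x = Gmat f x (ystar x)) /\
  (forall x x',
     opnorm (hessx (Phi f) x - hessx (Phi f) x')
       <= L2 * (1 + kappa) ^+ 2 * (1 + kappa) * enorm (x - x')).
Proof.
move=> [[dF [dG _]] [gradL [mu_gt0 [SC [hessL _]]]]] ystar_max kappa.
have hessxE := hessx_Phi dF dG gradL mu_gt0 SC ystar_max.
have diffPhi x := (diff_Phi dF gradL mu_gt0 SC ystar_max x).1.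
have diffgradPhi := differentiable_gradx_Phi dF dG gradL mu_gt0 SC ystar_max.
(* only in positive dimension do the hypotheses force [0 <= L1] and [0 <= L2] *)
have [mn0|mn_gt0] := posnP (m + n)%N.
  have /andP[/eqP m0 /eqP n0] : (m == 0) && (n == 0) by rewrite -addn_eq0 mn0.
  subst m n; split=> [x y x' y'|].
    rewrite (flatmx0 (Gmat f x y - _)) opnorm0 (flatmx0 (x - x')) pnorm0l.
    by rewrite (flatmx0 (y - y')) enorm0 mulr0.
  split; first exact: diffPhi.
  split; first exact: diffgradPhi.
  split=> [|x x']; first exact: hessxE.
  by rewrite (flatmx0 (hessx _ x - _)) opnorm0 (flatmx0 (x - x')) enorm0 mulr0.
have [x0 [y0 p_gt0]] := exists_pnorm_gt0 R mn_gt0.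
have L1_ge0 : 0 <= L1.
  by have := le_trans (pnorm_ge0 _ _) (gradL x0 y0 0 0); rewrite !subr0 pmulr_lge0.
have L2_ge0 : 0 <= L2.
  have := le_trans (opnorm_ge0 _) (hessL x0 y0 0 0).1.
  by rewrite !subr0 pmulr_lge0.
have G_lip x y x' y' := Gmat_lipschitz dF dG gradL mu_gt0 SC hessL x y x' y' L1_ge0.
split; first exact: G_lip.
split; first exact: diffPhi.
split; first exact: diffgradPhi.
split=> [|x x']; first exact: hessxE.
rewrite !hessxE; apply: le_trans (G_lip _ _ _ _) _.
rewrite /kappa -[leRHS]mulrA; apply: ler_wpM2l; first by rewrite mulr_ge0 ?sqr_ge0.
by rewrite -(ger0_norm L1_ge0); exact: pnorm_ystar_le.
Qed.
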